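(* Let $P$ be a poset on $[n]$ with natural labeling. For every $1\le j\le n-1$, the operator $\tau_j$ on $\mathcal{L}(P)$ can be expressed as a product (composite) of extended promotion operators $\partial_1,\dots,\partial_n$.
   Context: $\mathcal{L}(P)=\{\pi\in S_n : i\prec j \Rightarrow \pi^{-1}_i<\pi^{-1}_j\}$ in one-line notation $\pi=\pi_1\cdots\pi_n$. For $1\le i<n$, $\pi\tau_i$ swaps $\pi_i,\pi_{i+1}$ if they are incomparable in $P$ and is $\pi$ otherwise; operators act on the right, $\pi(\sigma\tau)=(\pi\sigma)\tau$. Extended promotion: $\partial_j=\tau_j\tau_{j+1}\cdots\tau_{n-1}$ for $1\le j\le n$. *)

From mathcomp Require Import all_boot all_order all_fingroup.
Set Implicit Arguments. Unset Strict Implicit. Unset Printing Implicit Defensive.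

(* A poset P on [n] = {1..n} is represented on 'I_n (element i+1 of [n] is
   the ordinal i) by its (reflexive) order relation [le]. *)
Definition is_poset n (le : rel 'I_n) : Prop :=
  [/\ reflexive le, antisymmetric le & transitive le].

Definition natural_labeling n (le : rel 'I_n) : Prop :=
  forall i j : 'I_n, le i j -> i <= j.

(* A permutation pi : {perm 'I_n} is read in one-line notation:
   pi p is the entry at position p (0-based).  pi^-1 i is the position of i. *)
Definition lin_ext n (le : rel 'I_n) (pi : {perm 'I_n}) : Prop :=
  forall i j : 'I_n, i != j -> le i j -> (pi^-1)%g i < (pi^-1)%g j.

(* tau_i (1-based i, 1 <= i < n): swap entries at positions i, i+1 (1-based),
   i.e. 0-based positions i-1 and i, if they are incomparable in P;
   identity otherwise (and identity for out-of-range i). *)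
Definition tau n (le : rel 'I_n) (i : nat) (pi : {perm 'I_n}) : {perm 'I_n} :=
  match (insub i.-1 : option 'I_n), (insub i : option 'I_n) with
  | Some a, Some b =>
      if le (pi a) (pi b) || le (pi b) (pi a) then pi else (tperm a b * pi)%g
  | _, _ => pi
  end.

(* Extended promotion, right action: pi d_j = pi tau_j tau_{j+1} ... tau_{n-1}
   (tau_j applied first).  d_n is the identity. *)
Definition ext_promotion n (le : rel 'I_n) (j : nat) (pi : {perm 'I_n}) :
  {perm 'I_n} :=
  foldl (fun p i => tau le i p) pi (iota j (n - j)).

Definition apply_promotions n (le : rel 'I_n) (ks : seq nat) (pi : {perm 'I_n}) :
  {perm 'I_n} :=
  foldl (fun p k => ext_promotion le k p) pi ks.

(* Since tau_j is an involution, every extended promotion is a bijection of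
   the (finite) set of permutations, so d_(j+1) has a finite order m.  As
   d_j = tau_j d_(j+1), we get tau_j = d_j d_(j+1)^(m-1).  This holds on all
   permutations. *)
From mathcomp Require Import all_boot all_order all_fingroup.
From mathcomp Require Import zify.
Set Implicit Arguments. Unset Strict Implicit.

Section ExtendedPromotion.

Variables (n : nat) (le : rel 'I_n).

Lemma tauK i : involutive (tau le i).
Proof.
move=> pi; rewrite /tau; case: (insub i.-1) => [a|] //; case: (insub i) => [b|] //.
case cmp: (le (pi a) (pi b) || le (pi b) (pi a)); first by rewrite cmp.
by rewrite !permM tpermL tpermR orbC cmp mulgA tperm2 mul1g.
Qed.

Lemma foldl_tau_inj s : injective (fun pi => foldl (fun p i => tau le i p) pi s).
Proof. by elim: s => [|i s IHs] //= pi1 pi2 /IHs /(inv_inj (tauK i)). Qed.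

Lemma ext_promotion_inj j : injective (ext_promotion le j).
Proof. exact: foldl_tau_inj. Qed.

Lemma ext_promotionE j pi :
  j < n -> ext_promotion le j pi = ext_promotion le j.+1 (tau le j pi).
Proof.
move=> ltjn; rewrite /ext_promotion subnS.
by case: (n - j) (subn_gt0 j n) => [|k]; rewrite ?ltjn.
Qed.

Lemma apply_promotions_nseq k j pi :
  apply_promotions le (nseq k j) pi = iter k (ext_promotion le j) pi.
Proof. by elim: k pi => [|k IHk] pi //=; rewrite IHk -iterSr. Qed.

End ExtendedPromotion.

Lemma iter_order_perm (T : finType) (f : {perm T}) x : iter #[f]%g f x = x.
Proof. by rewrite -permX expg_order perm1. Qed.

Theorem lemma2p2 (n : nat) (le : rel 'I_n) :
  is_poset le -> natural_labeling le ->
  forall j : nat, 1 <= j <= n - 1 ->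
  exists ks : seq nat,
    all (fun k => 1 <= k <= n) ks /\
    forall pi : {perm 'I_n}, lin_ext le pi ->
      tau le j pi = apply_promotions le ks pi.
Proof.
move=> _ _ j /andP[j_gt0 j_le]; have ltjn : j < n by lia.
pose f := perm (@ext_promotion_inj n le j.+1).
exists (j :: nseq #[f]%g.-1 j.+1); split.
  by rewrite /= all_nseq; apply/andP; split; [lia | apply/orP; right; lia].
move=> pi _; rewrite /apply_promotions /= -/(apply_promotions _ _ _).
rewrite apply_promotions_nseq ext_promotionE //.
rewrite -iterSr prednK ?order_gt0 //.
by rewrite (eq_iter (f' := f)) ?iter_order_perm // => x; rewrite permE.
Qed.
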